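(* Assume the sponge $F\subset[0,1]^d$ satisfies the SPPC. Then for all $\mathbf i\in\Sigma$ and $r>0$, $\pi(B_{\mathbf i}(r))\subseteq B(\pi(\mathbf i),\sqrt d\,r)$. Moreover, if $F$ satisfies the very strong SPPC and $\delta_0>0$ is a constant such that for every $\sigma\in\mathcal A$, $1\le n\le d$ and $i,j\in\mathcal I$ for which $f_i,f_j$ do not overlap exactly on $E_n^\sigma$ one has $\mathrm{dist}\big(\Pi_n^\sigma(f_i([0,1]^d)),\Pi_n^\sigma(f_j([0,1]^d))\big)\ge\delta_0$, then for all $\mathbf i\in\Sigma$ and $r>0$, $B(\pi(\mathbf i),\delta_0r)\cap F\subseteq\pi(B_{\mathbf i}(r))$.
   Context: Setting: $\mathcal I=\{1,\dots,N\}$, $f_i(x)=A_ix+t_i$ on $\mathbb R^d$ with $A_i=\mathrm{diag}(\lambda_i^{(1)},\dots,\lambda_i^{(d)})$, all $\lambda_i^{(n)}\in(0,1)$, $f_i([0,1]^d)\subset[0,1]^d$, no two maps agree on $[0,1]^d$, and for all $m\ne n$ some $i$ has $\lambda_i^{(n)}\ne\lambda_i^{(m)}$; $F$ is the attractor. $\Sigma=\mathcal I^{\mathbb N}$, $\pi(\mathbf i)=\lim_kf_{i_1}\circ\cdots\circ f_{i_k}(0)$; $B(x,\rho)$ is the Euclidean ball. For $\mathbf i\in\Sigma$, $r>0$, $L_{\mathbf i}(r,n)$ is the unique integer with $\prod_{\ell=1}^{L_{\mathbf i}(r,n)}\lambda_{i_\ell}^{(n)}\le r<\prod_{\ell=1}^{L_{\mathbf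 i}(r,n)-1}\lambda_{i_\ell}^{(n)}$. $\mathbf i$ determines a $\sigma$-ordered cube at scale $r$ if $L_{\mathbf i}(r,\sigma_d)\le\dots\le L_{\mathbf i}(r,\sigma_1)$, ties resolved by: if coordinates $k<m$ have $L_{\mathbf i}(r,k)=L_{\mathbf i}(r,m)$ then $k$ precedes $m$ iff $\prod_{\ell=1}^{L_{\mathbf i}(r,k)}\lambda_{i_\ell}^{(k)}\ge\prod_{\ell=1}^{L_{\mathbf i}(r,k)}\lambda_{i_\ell}^{(m)}$; write $\sigma_{\mathbf i}(r)$ for it, and $\mathcal A$ for the set of all orderings so arising. $E_n^\sigma$: span of coordinate axes $\sigma_1,\dots,\sigma_n$, $\Pi_n^\sigma$ the orthogonal projection onto it; $f_i,f_j$ overlap exactly on $E_n^\sigma$ if $\Pi_n^\sigma f_i=\Pi_n^\sigma f_j$ on $[0,1]^d$. SPPC: for all $\sigma\in\mathcal A$, $1\le n\le d$, $i,j$, either $f_i,f_j$ overlap exactly on $E_n^\sigma$ or $\Pi_n^\sigma(f_i((0,1)^d))\cap\Pi_n^\sigma(f_j((0,1)^d))=\emptyset$; very strong SPPC: the same with $[0,1]^d$ in place of $(0,1)^d$. For $1\le n\le d-1$, $\mathcal I_n^\sigma$ is the set of $j$ such that no $i<j$ overlaps exactly with $j$ on $E_n^\sigma$; $\mathcal I_d^\sigma=\mathcal I$; $\Pi_n^\sigma j$ (on indices) is the unique element of $\mathcal I_n^\sigma$ overlapping exactly with $j$ on $E_n^\sigma$, extended to $\Sigma$ coordinatewise. $B_{\mathbf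 i}(r)=\{\mathbf j\in\Sigma:|\Pi_n^\sigma\mathbf j\wedge\Pi_n^\sigma\mathbf i|\ge L_{\mathbf i}(r,\sigma_n)\ \forall n\}$ with $\sigma=\sigma_{\mathbf i}(r)$ and $\wedge$ the longest common prefix. *)

From HB Require Import structures.
From mathcomp Require Import all_boot all_order all_algebra all_fingroup.
From mathcomp Require Import all_classical all_reals all_analysis.
Set Implicit Arguments. Unset Strict Implicit. Unset Printing Implicit Defensive.
Import Order.TTheory GRing.Theory Num.Theory numFieldNormedType.Exports.
Local Open Scope classical_set_scope.
Local Open Scope ring_scope.

Section Sponge.
Variables (R : realType) (N d : nat).
(* lam i k = lambda_i^{(k)}, t i k = k-th coordinate of the translation t_i *)
Variables (lam t : 'I_N -> 'I_d -> R).

Local Notation point := ('I_d -> R).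
(* the symbolic space Sigma = I^N; sequence index 0 is i_1 *)
Local Notation word := (nat -> 'I_N).

Definition fmap (i : 'I_N) (x : point) : point := fun k => lam i k * x k + t i k.

Definition cube : set point := [set x | forall k, 0 <= x k <= 1].
Definition ocube : set point := [set x | forall k, 0 < x k < 1].

Definition enorm (x : point) : R := Num.sqrt (\sum_(k < d) x k ^+ 2).
Definition ball_e (x : point) (rho : R) : set point :=
  [set y | enorm (fun k => y k - x k) <= rho].

(* f_{i_1} o ... o f_{i_k} (x) *)
Fixpoint comp (w : word) (k : nat) (x : point) : point :=
  match k with
  | 0%N => x
  | k'.+1 => comp w k' (fmap (w k') x)
  end.

(* the natural projection pi(w) = lim_k f_{i_1} o ... o f_{i_k} (0),
   limit in R^d taken coordinatewise *)
Definition pi_map (w : word) : point :=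
  fun c => limn (fun k => comp w k (fun _ => 0) c).

Definition is_attractor (F : set point) : Prop :=
  F !=set0 /\ compact (F : set {ptws 'I_d -> R}) /\ F = \bigcup_(i in [set: 'I_N]) (fmap i @` F).

Definition sponge_hyp : Prop :=
  (forall i k, 0 < lam i k < 1) /\
  (forall i, fmap i @` cube `<=` cube) /\
  (forall i j : 'I_N, i != j -> ~ (forall x, cube x -> fmap i x = fmap j x)) /\
  (forall m n : 'I_d, m != n -> exists i, lam i n != lam i m).

Definition prodL (w : word) (k : 'I_d) (L : nat) : R := \prod_(l < L) lam (w l) k.

(* L_w(r,k): the least L with prod_{l=1}^L lambda^{(k)}_{i_l} <= r
   (for r < 1 this is the unique L with prod_{1}^{L} <= r < prod_{1}^{L-1}) *)
Definition Lnum (w : word) (r : R) (k : 'I_d) : nat :=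
  match pselect (exists L, prodL w k L <= r) with
  | left h => ex_minn h
  | right _ => 0%N
  end.

(* "coordinate k precedes coordinate m" in the ordering sigma_w(r) *)
Definition prec (w : word) (r : R) (k m : 'I_d) : bool :=
  (Lnum w r m < Lnum w r k)%N ||
  ((Lnum w r k == Lnum w r m) &&
   ( ((k < m)%N && (prodL w m (Lnum w r k) <= prodL w k (Lnum w r k)))
  || ((m < k)%N && ~~ (prodL w k (Lnum w r m) <= prodL w m (Lnum w r m))))).

(* w determines a sigma-ordered cube at scale r (sigma_1 = s 0, ..., sigma_d = s (d-1)) *)
Definition sigma_ordered (w : word) (r : R) (s : {perm 'I_d}) : bool :=
  [forall a : 'I_d, forall b : 'I_d, (a < b)%N ==> prec w r (s a) (s b)].

Definition sigma_of (w : word) (r : R) : {perm 'I_d} :=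
  odflt 1%g [pick s : {perm 'I_d} | sigma_ordered w r s].

Definition Acal : set {perm 'I_d} :=
  [set s | exists (w : word) (r : R), 0 < r /\ sigma_of w r = s].

Definition inE_ (s : {perm 'I_d}) (n : nat) (k : 'I_d) : bool :=
  [exists a : 'I_d, (a < n)%N && (s a == k)].

Definition projE (s : {perm 'I_d}) (n : nat) (x : point) : point :=
  fun k => if inE_ s n k then x k else 0.

Definition overlap (s : {perm 'I_d}) (n : nat) (i j : 'I_N) : Prop :=
  forall x, cube x -> projE s n (fmap i x) = projE s n (fmap j x).

Definition SPPC : Prop :=
  forall s, Acal s -> forall n, (1 <= n <= d)%N -> forall i j : 'I_N,
    overlap s n i j \/
    (projE s n \o fmap i) @` ocube `&` (projE s n \o fmap j) @` ocube = set0.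

Definition very_strong_SPPC : Prop :=
  forall s, Acal s -> forall n, (1 <= n <= d)%N -> forall i j : 'I_N,
    overlap s n i j \/
    (projE s n \o fmap i) @` cube `&` (projE s n \o fmap j) @` cube = set0.

Definition sep_const (delta0 : R) : Prop :=
  forall s, Acal s -> forall n, (1 <= n <= d)%N -> forall i j : 'I_N,
    ~ overlap s n i j ->
    forall x y, cube x -> cube y ->
      delta0 <= enorm (fun k => projE s n (fmap i x) k - projE s n (fmap j y) k).

Definition Iset (s : {perm 'I_d}) (n : nat) (j : 'I_N) : bool :=
  if (n < d)%N then [forall i : 'I_N, (i < j)%N ==> ~~ `[< overlap s n i j >]]
  else true.

Definition projIdx (s : {perm 'I_d}) (n : nat) (j : 'I_N) : 'I_N :=
  odflt j [pick i : 'I_N | Iset s n i && `[< overlap s n i j >]].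

Definition projW (s : {perm 'I_d}) (n : nat) (w : word) : word :=
  fun l => projIdx s n (w l).

(* |u ^ v| >= L : u and v agree on their first L symbols *)
Definition prefix_ge (u v : word) (L : nat) : Prop :=
  forall l, (l < L)%N -> u l = v l.

Definition Bset (w : word) (r : R) : set word :=
  [set v | forall a : 'I_d,
     prefix_ge (projW (sigma_of w r) a.+1 v) (projW (sigma_of w r) a.+1 w)
               (Lnum w r (sigma_of w r a))].

End Sponge.

(* Because sigma_w(r) lists the coordinates by decreasing L_w(r, .), exact
   overlap on E_{a+1} of the first L_w(r, sigma_a) letters of v and w makes the
   k-th coordinates of f_{v_l} and f_{w_l} agree for all l < L_w(r, k).  Then
   pi(v)_k and pi(w)_k lie in one interval of length
   prod_{l < L_w(r,k)} lambda^(k)_{w_l} <= r, which gives the sqrt d * r bound.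
   Conversely, let |pi(v) - pi(w)| <= delta0 r and let l < L_w(r, sigma_a) be the
   first letter with f_{v_l}, f_{w_l} not overlapping exactly on E_{a+1}.  On
   E_{a+1}, pi(v) - pi(w) is then a difference of points of f_{v_l}([0,1]^d) and
   f_{w_l}([0,1]^d), of norm >= delta0, stretched coordinatewise by products
   exceeding r: a contradiction.  Every point of F is pi of some word because F
   is the attractor. *)

From HB Require Import structures.
From mathcomp Require Import all_boot all_order all_algebra all_fingroup.
From mathcomp Require Import all_classical all_reals all_analysis.
From mathcomp Require Import ring lra.
Import Order.TTheory GRing.Theory Num.Theory numFieldNormedType.Exports.
Local Open Scope classical_set_scope.
Local Open Scope ring_scope.

Lemma exists_perm_sorted {disp} {T : orderType disp} {n} (key : 'I_n -> T) :
  injective key ->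
  exists s : 'S_n, forall a b : 'I_n, (a < b)%N -> (key (s a) < key (s b))%O.
Proof.
move=> key_inj; pose leK := relpre key <=%O.
have /tuple_permP[s sortE] : perm_eq (sort leK (enum 'I_n)) (ord_tuple n).
  by rewrite perm_sort val_ord_tuple.
have sorted_leK : sorted leK [tuple tnth (ord_tuple n) (s i) | i < n].
  by rewrite -sortE; apply: sort_sorted => x y; exact: le_total.
exists s => a b ab; rewrite lt_neqAle (inj_eq key_inj) (inj_eq perm_inj).
rewrite -(inj_eq val_inj) neq_ltn ab /=.
have := @sorted_leq_nth _ leK (fun x y z => @le_trans _ _ (key x) (key y) (key z))
  (fun x => le_refl (key x)) a _ sorted_leK a b.
rewrite !inE size_tuple !ltn_ord => /(_ isT isT (ltnW ab)).
by rewrite /= !(nth_map a) -?enumT ?size_enum_ord ?ltn_ord // !nth_ord_enum !tnth_ord_tuple.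
Qed.

Section EuclideanNorm.
Context {R : realType} {d : nat}.
Implicit Types (u z : 'I_d -> R) (c : R).

Lemma sqr_le_norm (x y : R) : `|x| <= `|y| -> x ^+ 2 <= y ^+ 2.
Proof.
by rewrite -[x ^+ 2]real_normK ?num_real // -[y ^+ 2]real_normK ?num_real // ler_sqr.
Qed.

Lemma enorm_le u z : (forall k, `|u k| <= `|z k|) -> enorm u <= enorm z.
Proof.
by move=> uz; apply/ler_wsqrtr/ler_sum => k _; exact/sqr_le_norm/uz.
Qed.

Lemma enorm_lt u z :
  (forall k, `|u k| <= `|z k|) -> (exists k, `|u k| < `|z k|) -> enorm u < enorm z.
Proof.
move=> uz [k0 uz0].
have sum_lt : \sum_(k < d) u k ^+ 2 < \sum_(k < d) z k ^+ 2.
  rewrite (bigD1 k0) //= [X in _ < X](bigD1 k0) //=.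
  apply: ltr_leD; last by apply: ler_sum => k _; exact: sqr_le_norm.
  rewrite -[u k0 ^+ 2]real_normK ?num_real // -[z k0 ^+ 2]real_normK ?num_real //.
  by rewrite ltr_sqr.
by rewrite ltr_sqrt // (le_lt_trans _ sum_lt) // sumr_ge0 // => k _; exact: sqr_ge0.
Qed.

Lemma enormZ c u : enorm (fun k => c * u k) = `|c| * enorm u.
Proof.
rewrite /enorm; under eq_bigr do rewrite exprMn.
by rewrite -mulr_sumr sqrtrM ?sqr_ge0 // sqrtr_sqr.
Qed.

Lemma enorm_cst c : enorm (fun _ : 'I_d => c) = Num.sqrt d%:R * `|c|.
Proof.
by rewrite /enorm sumr_const card_ord -[_ *+ d]mulr_natl sqrtrM ?ler0n // sqrtr_sqr.
Qed.

Lemma enorm_lt_scale {c u z} : 0 < c ->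
  (forall k, u k != 0 -> c * `|u k| < `|z k|) -> (exists k, u k != 0) ->
  c * enorm u < enorm z.
Proof.
move=> c_gt0 uz [k0 uk0]; rewrite -(gtr0_norm c_gt0) -enormZ.
apply: enorm_lt => [k|]; last by exists k0; rewrite normrM (gtr0_norm c_gt0) uz.
have [->|uk] := eqVneq (u k) 0; first by rewrite mulr0 normr0.
by rewrite normrM (gtr0_norm c_gt0) ltW ?uz.
Qed.

Lemma enorm_gt0 {u} : 0 < enorm u -> exists k, u k != 0.
Proof.
move=> u_gt0; apply/existsP; apply: contraTT u_gt0 => /existsPn u0.
by rewrite -leNgt /enorm big1 ?sqrtr0 // => k _; rewrite (eqP (negPn (u0 k))) expr0n.
Qed.

End EuclideanNorm.

Lemma compact_coord_bounded {R : realType} {d : nat} (F : set ('I_d -> R)) (c : 'I_d) :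
  compact (F : set {ptws 'I_d -> R}) -> exists B, forall y, F y -> `|y c| <= B.
Proof.
move=> F_compact; have coord_cont : continuous (fun f : {ptws 'I_d -> R} => f c).
  exact: (@proj_continuous 'I_d (fun _ => R) c).
have [M [_ M_bd]] :=
  compact_bounded (continuous_compact (continuous_subspaceT coord_cont) F_compact).
exists (`|M| + 1) => y Fy; apply: (M_bd (`|M| + 1)); last by exists y.
by rewrite (le_lt_trans (ler_norm M)) // ltrDl.
Qed.

Definition shiftw {N : nat} (w : nat -> 'I_N) (k : nat) : nat -> 'I_N :=
  fun l => w (k + l)%N.

Section Sponge.
Context {R : realType} {N d : nat} {lam t : 'I_N -> 'I_d -> R}.
Implicit Types (w v : nat -> 'I_N) (k : 'I_d) (r : R).

Hypothesis lam01 : forall i k, 0 < lam i k < 1.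
Hypothesis fmap_cube : forall i, fmap lam t i @` @cube R d `<=` @cube R d.

Lemma prodL0 w k : prodL lam w k 0 = 1.
Proof. by rewrite /prodL big_ord0. Qed.

Lemma prodLS w k l : prodL lam w k l.+1 = prodL lam w k l * lam (w l) k.
Proof. by rewrite /prodL big_ord_recr. Qed.

Lemma prodL_gt0 w k l : 0 < prodL lam w k l.
Proof. by apply: prodr_gt0 => i _; case/andP: (lam01 (w i) k). Qed.

Lemma exists_prodL_le w k e : 0 < e -> exists L, prodL lam w k L <= e.
Proof.
move=> e_gt0; pose M := \big[Order.max/0]_i lam i k.
have M_ge0 : 0 <= M by exact: bigmax_ge_id.
have M_lt1 : M < 1 by apply: bigmax_lt => // i _; case/andP: (lam01 i k).
have prodL_le L : prodL lam w k L <= M ^+ L.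
  elim: L => [|L IH]; first by rewrite prodL0 expr0.
  rewrite prodLS exprSr ler_pM ?(ltW (prodL_gt0 _ _ _)) //; last exact: le_bigmax.
  by case/andP: (lam01 (w L) k) => /ltW.
have := @cvg_expr R M; rewrite ger0_norm // => /(_ M_lt1) /cvgr0_norm_lt /(_ _ e_gt0).
case=> L _ /(_ L (leqnn L)) /=; rewrite ger0_norm ?exprn_ge0 // => ML_lt.
by exists L; rewrite (le_trans (prodL_le L)) ?ltW.
Qed.

Lemma prodL_Lnum_le w r k : 0 < r -> prodL lam w k (Lnum lam w r k) <= r.
Proof.
move=> r_gt0; rewrite /Lnum; case: pselect => [h|[]]; last exact: exists_prodL_le.
by case: ex_minnP.
Qed.

Lemma lt_prodL_Lnum w r k l : (l < Lnum lam w r k)%N -> r < prodL lam w k l.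
Proof.
rewrite /Lnum; case: pselect => // L_ex; case: ex_minnP => L _ L_min lL.
by rewrite ltNge; apply: contraTN lL => /L_min; rewrite -leqNgt.
Qed.

Lemma comp_coord w l x k :
  comp lam t w l x k = prodL lam w k l * x k + comp lam t w l (fun=> 0) k.
Proof.
elim: l x => [|l IH] x /=; first by rewrite prodL0 mul1r addr0.
by rewrite IH [comp _ _ _ l (fmap _ _ _ _) k]IH prodLS /fmap; ring.
Qed.

Lemma comp_add w l m x :
  comp lam t w (l + m) x = comp lam t w l (comp lam t (shiftw w l) m x).
Proof. by elim: m x => [|m IH] x /=; rewrite ?addn0 ?addnS //= IH. Qed.

Lemma comp_cube w l x : @cube R d x -> @cube R d (comp lam t w l x).
Proof.
by elim: l x => [|l IH] x x_cube //=; apply/IH/fmap_cube; exists x.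
Qed.

Lemma cube0 : @cube R d (fun=> 0).
Proof. by move=> k; rewrite lexx ler01. Qed.

Lemma t_ge0 i k : 0 <= t i k.
Proof.
have /(_ k) : @cube R d (fmap lam t i (fun=> 0)).
  by apply: fmap_cube; exists (fun=> 0); first exact: cube0.
by rewrite /fmap mulr0 add0r => /andP[].
Qed.

Lemma comp0_nondecreasing w k :
  {homo (fun m => comp lam t w m (fun=> 0) k) : m n / (m <= n)%N >-> m <= n}.
Proof.
apply/nondecreasing_seqP => m /=.
rewrite [X in _ <= X]comp_coord /fmap mulr0 add0r lerDr.
by rewrite mulr_ge0 ?t_ge0 ?(ltW (prodL_gt0 _ _ _)).
Qed.

Lemma comp0_cvg w k : cvgn (fun m => comp lam t w m (fun=> 0) k).
Proof.
apply: nondecreasing_is_cvgn; first exact: comp0_nondecreasing.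
by exists 1 => _ [m _ <-]; case/andP: (comp_cube w m _ cube0 k).
Qed.

Lemma pi_cube w : @cube R d (pi_map lam t w).
Proof.
move=> k; have cvg_comp := comp0_cvg w k.
apply/andP; split.
  apply: le_trans (nondecreasing_cvgn_le (comp0_nondecreasing w k) cvg_comp 0%N).
  by case/andP: (cube0 k).
by apply: limr_le => //; apply: nearW => m; case/andP: (comp_cube w m _ cube0 k).
Qed.

Lemma pi_shift w k L :
  pi_map lam t w k =
    prodL lam w k L * pi_map lam t (shiftw w L) k + comp lam t w L (fun=> 0) k.
Proof.
pose u m := comp lam t w m (fun=> 0) k.
have cvg_pi : (fun m => u (m + L)%N) @ \oo --> pi_map lam t w k.
  by rewrite cvg_shiftn; exact: comp0_cvg.
have cvg_shift : (fun m => u (m + L)%N) @ \oo -->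
    prodL lam w k L * pi_map lam t (shiftw w L) k + comp lam t w L (fun=> 0) k.
  rewrite (_ : (fun m => _) = fun m =>
      prodL lam w k L * comp lam t (shiftw w L) m (fun=> 0) k + comp lam t w L (fun=> 0) k).
    by apply: cvgD; [apply: cvgM; [exact: cvg_cst | exact: comp0_cvg] | exact: cvg_cst].
  by apply: funext => m; rewrite /u addnC comp_add comp_coord.
exact: (cvg_unique _ cvg_pi cvg_shift).
Qed.

Lemma pi_step w k l :
  pi_map lam t w k = prodL lam w k l * fmap lam t (w l) (pi_map lam t (shiftw w l.+1)) k
                     + comp lam t w l (fun=> 0) k.
Proof. by rewrite (pi_shift w k l.+1) prodLS /= comp_coord /fmap; ring. Qed.

Lemma fmap_pi_cube i w : @cube R d (fmap lam t i (pi_map lam t w)).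
Proof. by apply: fmap_cube; exists (pi_map lam t w); first exact: pi_cube. Qed.

Definition coord_agree v w k L :=
  forall l, (l < L)%N -> lam (v l) k = lam (w l) k /\ t (v l) k = t (w l) k.

Lemma coord_agree_prodL_comp {v w k L} : coord_agree v w k L ->
  prodL lam v k L = prodL lam w k L /\
  comp lam t v L (fun=> 0) k = comp lam t w L (fun=> 0) k.
Proof.
elim: L => [|L IH] agr; first by rewrite !prodL0.
have [eq_prodL eq_comp] := IH (fun l lL => agr l (ltnW lL)).
have [eq_lam eq_t] := agr L (ltnSn L).
by rewrite !prodLS /= comp_coord [comp _ _ w _ _ _]comp_coord /fmap eq_prodL eq_comp eq_lam eq_t.
Qed.

Lemma pi_sub_coord_agree {v w k l} : coord_agree v w k l ->
  pi_map lam t v k - pi_map lam t w k =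
    prodL lam w k l * (fmap lam t (v l) (pi_map lam t (shiftw v l.+1)) k
                       - fmap lam t (w l) (pi_map lam t (shiftw w l.+1)) k).
Proof.
move=> /coord_agree_prodL_comp[eq_prodL eq_comp].
by rewrite (pi_step v k l) (pi_step w k l) eq_prodL eq_comp; ring.
Qed.

Lemma pi_dist_coord_agree {v w k l} : coord_agree v w k l ->
  `|pi_map lam t v k - pi_map lam t w k| <= prodL lam w k l.
Proof.
move=> /pi_sub_coord_agree ->; rewrite normrM gtr0_norm ?prodL_gt0 //.
apply: ler_piMr; first exact: ltW (prodL_gt0 _ _ _).
have /andP[x_ge0 x_le1] := fmap_pi_cube (v l) (shiftw v l.+1) k.
have /andP[y_ge0 y_le1] := fmap_pi_cube (w l) (shiftw w l.+1) k.
by rewrite ler_norml; apply/andP; split; lra.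
Qed.

Lemma overlap_sym {s n i j} : overlap lam t s n i j -> overlap lam t s n j i.
Proof. by move=> ov x x_cube; rewrite ov. Qed.

Lemma overlap_trans {s n i j l} :
  overlap lam t s n i j -> overlap lam t s n j l -> overlap lam t s n i l.
Proof. by move=> ov_ij ov_jl x x_cube; rewrite ov_ij // ov_jl. Qed.

Lemma overlap_coord s n i j k : overlap lam t s n i j -> inE_ s n k ->
  lam i k = lam j k /\ t i k = t j k.
Proof.
move=> ov k_in; have cube1 : @cube R d (fun=> 1) by move=> m; rewrite lexx ler01.
have := congr1 (fun x => x k) (ov _ cube0); have := congr1 (fun x => x k) (ov _ cube1).
rewrite /projE k_in /fmap !mulr0 !mulr1 !add0r => eq1 eq_t.
by split => //; apply: (addIr (t i k)); rewrite {2}eq_t.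
Qed.

Lemma projIdx_overlap s n j : overlap lam t s n (projIdx lam t s n j) j.
Proof. by rewrite /projIdx; case: pickP => [i /andP[_ /asboolP]|]. Qed.

Lemma exists_Iset_overlap s n j :
  exists m, Iset lam t s n m && `[< overlap lam t s n m j >].
Proof.
case: (@arg_minnP _ j (fun m => `[< overlap lam t s n m j >]) val); first exact/asboolP.
move=> m /asboolP ov_mj m_min; exists m; rewrite asboolT // andbT /Iset.
case: ifP => // _; apply/forallP => i; apply/implyP => im; apply/asboolP => ov_im.
by have := m_min i (asboolT (overlap_trans ov_im ov_mj)); rewrite leqNgt im.
Qed.

Lemma projIdx_eq s n i j :
  projIdx lam t s n i = projIdx lam t s n j <-> overlap lam t s n i j.
Proof.
split=> [eq_ij|ov_ij].
  apply: overlap_trans (projIdx_overlap s n j).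
  by rewrite -eq_ij; exact/overlap_sym/projIdx_overlap.
rewrite /projIdx (@eq_pick _ _ (fun m => Iset lam t s n m && `[< overlap lam t s n m j >])).
  case: pickP => [//|none].
  by have [m] := exists_Iset_overlap s n j; rewrite none.
move=> m /=; congr (_ && _); apply/asboolP/asboolP => ov_m.
  exact: overlap_trans ov_ij.
exact: overlap_trans (overlap_sym ov_ij).
Qed.

Definition prec_key w r k : nat^d *l (R^d *l nat) :=
  (Lnum lam w r k, (prodL lam w k (Lnum lam w r k), val k)).

Lemma prec_key_inj w r : injective (prec_key w r).
Proof. by move=> k m [_ _ /val_inj]. Qed.

Lemma precE w r k m : prec lam w r k m = (prec_key w r k < prec_key w r m)%O.
Proof.
rewrite /prec /prec_key !ltEprodlexi /= !leEdual /= !leEnat ltEnat.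
case: ltngtP => [//|//|->] /=.
case: (ltngtP k m) => [km|mk|/val_inj ->] /=.
- by rewrite orbF implybT andbT.
- by rewrite implybF -lt_leAnge ltNge.
- by rewrite lexx.
Qed.

Lemma sigma_of_ordered w r : sigma_ordered lam w r (sigma_of lam w r).
Proof.
have [s s_sorted] := exists_perm_sorted _ (prec_key_inj w r).
have s_ordered : sigma_ordered lam w r s.
  by apply/forallP => a; apply/forallP => b; apply/implyP => ab; rewrite precE s_sorted.
by rewrite /sigma_of; case: pickP => [//|/(_ s)]; rewrite s_ordered.
Qed.

Lemma inE_perm (s : {perm 'I_d}) (a : 'I_d) : inE_ s a.+1 (s a).
Proof. by apply/existsP; exists a; rewrite ltnSn eqxx. Qed.

Lemma Lnum_sigma_le w r (a : 'I_d) k : inE_ (sigma_of lam w r) a.+1 k ->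
  (Lnum lam w r (sigma_of lam w r a) <= Lnum lam w r k)%N.
Proof.
case/existsP => b /andP[]; rewrite ltnS leq_eqVlt => /orP[/eqP/val_inj -> /eqP -> //|ba /eqP <-].
move: (sigma_of_ordered w r) => /forallP/(_ b)/forallP/(_ a)/implyP/(_ ba).
by rewrite precE !ltEprodlexi /= !leEdual !leEnat => /andP[].
Qed.

Lemma BsetP w r v : Bset lam t w r v <->
  forall a l, (l < Lnum lam w r (sigma_of lam w r a))%N ->
    overlap lam t (sigma_of lam w r) a.+1 (v l) (w l).
Proof. by split=> Bv a l lL; apply/projIdx_eq/Bv. Qed.

Lemma Bset_coord_agree {w r v} k : Bset lam t w r v -> coord_agree v w k (Lnum lam w r k).
Proof.
move=> /BsetP Bv l; set s := sigma_of lam w r; rewrite -{1}(permKV s k) => lL.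
by apply: overlap_coord (Bv _ _ lL) _; rewrite -{2}(permKV s k) inE_perm.
Qed.

Lemma pi_Bset_sub_ball w r : 0 < r ->
  pi_map lam t @` Bset lam t w r `<=` ball_e (pi_map lam t w) (Num.sqrt d%:R * r).
Proof.
move=> r_gt0 _ [v Bv <-]; rewrite /ball_e /= -(gtr0_norm r_gt0) -enorm_cst.
apply: enorm_le => k; rewrite (gtr0_norm r_gt0).
exact: le_trans (pi_dist_coord_agree (Bset_coord_agree k Bv)) (prodL_Lnum_le _ _ _ r_gt0).
Qed.

Lemma Bset_of_ball {w r v} {delta0 : R} : 0 < delta0 -> sep_const lam t delta0 -> 0 < r ->
  ball_e (pi_map lam t w) (delta0 * r) (pi_map lam t v) -> Bset lam t w r v.
Proof.
rewrite /ball_e /= => delta0_gt0 sep r_gt0 near_vw.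
apply/BsetP => a; set s := sigma_of lam w r.
elim/ltn_ind => l IH lL; apply: contrapT => not_ov.
set x := pi_map lam t (shiftw v l.+1); set x' := pi_map lam t (shiftw w l.+1).
set u := fun k => projE s a.+1 (fmap lam t (v l) x) k - projE s a.+1 (fmap lam t (w l) x') k.
set z := fun k => pi_map lam t v k - pi_map lam t w k.
have u_ge : delta0 <= enorm u.
  apply: (sep s _ a.+1 _ (v l) (w l) not_ov x x' (pi_cube _) (pi_cube _)).
    by exists w, r.
  by rewrite /= ltn_ord.
have z_eq k : inE_ s a.+1 k -> z k = prodL lam w k l * u k /\ r < prodL lam w k l.
  move=> k_in; split; last exact/lt_prodL_Lnum/(leq_trans lL)/Lnum_sigma_le.
  rewrite /z (pi_sub_coord_agree (l:=l)) /u /projE ?k_in //.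
  by move=> l' l'l; exact: overlap_coord (IH l' l'l (ltn_trans l'l lL)) k_in.
have u0 k : ~~ inE_ s a.+1 k -> u k = 0.
  by move=> k_out; rewrite /u /projE (negbTE k_out) subrr.
have : r * enorm u < enorm z.
  apply: (enorm_lt_scale r_gt0 _ (enorm_gt0 (lt_le_trans delta0_gt0 u_ge))) => k uk.
  have k_in : inE_ s a.+1 k by case/boolP: (inE_ s a.+1 k) uk => // /u0 ->; rewrite eqxx.
  have [-> r_lt] := z_eq k k_in.
  by rewrite normrM (gtr0_norm (prodL_gt0 _ _ _)) ltr_pM2r ?normr_gt0.
have : delta0 * r <= r * enorm u by rewrite [delta0 * r]mulrC ler_pM2l.
lra.
Qed.

Lemma attractor_address {F y} : is_attractor lam t F -> F y ->
  exists v (Y : nat -> 'I_d -> R),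
    (forall m, F (Y m)) /\ forall m, y = comp lam t v m (Y m).
Proof.
move=> [_ [_ F_eq]] Fy.
have step (z : {z | F z}) : exists p : 'I_N * {z | F z}, sval z = fmap lam t p.1 (sval p.2).
  by case: z => z /=; rewrite {1}F_eq => -[i _ [z' Fz' <-]]; exists (i, exist _ z' Fz').
have [g g_spec] := choice step.
pose Y m := iter m (fun z => (g z).2) (exist _ y Fy).
exists (fun m => (g (Y m)).1), (fun m => sval (Y m)); split=> [m|]; first exact: svalP.
by elim=> [|m IH] //=; rewrite IH -g_spec.
Qed.

Lemma pi_of_address {v y} {Y : nat -> 'I_d -> R} {c B} :
  (forall m, `|Y m c| <= B) -> (forall m, y = comp lam t v m (Y m)) ->
  pi_map lam t v c = y c.
Proof.
move=> Y_bd y_eq; have B_ge0 : 0 <= B := le_trans (normr_ge0 _) (Y_bd 0%N).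
apply/eqP; rewrite -subr_eq0 -normr_le0; apply/ler_addgt0Pr => e e_gt0; rewrite add0r.
have [m] := exists_prodL_le v c _ (divr_gt0 e_gt0 (ltr_wpDl B_ge0 ltr01)).
rewrite ler_pdivlMr ?ltr_wpDl // => prod_le.
rewrite (pi_shift v c m) (y_eq m) [comp _ _ v m (Y m) c]comp_coord.
rewrite opprD addrACA subrr addr0 -mulrBr normrM gtr0_norm ?prodL_gt0 //.
apply: le_trans prod_le; apply: ler_wpM2l; first exact: ltW (prodL_gt0 _ _ _).
have /andP[x_ge0 x_le1] := pi_cube (shiftw v m) c.
have := Y_bd m; rewrite !ler_norml => /andP[Y_ge Y_le]; apply/andP; split; lra.
Qed.

Lemma attractor_sub_range_pi {F} : is_attractor lam t F -> F `<=` range (pi_map lam t).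
Proof.
move=> F_attr y Fy; have [v [Y [FY y_eq]]] := attractor_address F_attr Fy.
exists v => //; apply: funext => c.
have [B B_bd] := compact_coord_bounded _ c F_attr.2.1.
exact: pi_of_address (fun m => B_bd _ (FY m)) y_eq.
Qed.

End Sponge.

Theorem lemma6p1 (R : realType) (N d : nat) (lam t : 'I_N -> 'I_d -> R)
    (F : set ('I_d -> R)) :
  sponge_hyp lam t -> is_attractor lam t F -> SPPC lam t ->
  (forall (w : nat -> 'I_N) (r : R), 0 < r ->
     pi_map lam t @` Bset lam t w r `<=`
       ball_e (pi_map lam t w) (Num.sqrt (d%:R) * r)) /\
  (very_strong_SPPC lam t -> forall delta0 : R, 0 < delta0 ->
     sep_const lam t delta0 ->
     forall (w : nat -> 'I_N) (r : R), 0 < r ->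
       ball_e (pi_map lam t w) (delta0 * r) `&` F `<=` pi_map lam t @` Bset lam t w r).
Proof.
move=> [lam01 [fmap_cube _]] F_attr _; split=> [w r r_gt0|_ delta0 delta0_gt0 sep w r r_gt0].
  exact: pi_Bset_sub_ball.
move=> y [near_y /(attractor_sub_range_pi lam01 fmap_cube F_attr)[v _ v_y]]; subst y.
by exists v; first exact (Bset_of_ball lam01 fmap_cube delta0_gt0 sep r_gt0 near_y).
Qed.
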